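(* If $X$ is a metric space with weak hyperbolic property C, then $X$ has Yu's property A.
   Context: For $R>0$, a family $\mathcal U$ of nonempty subsets of a metric space is $R$-disjoint if $d(A,B)>R$ for all distinct $A,B\in\mathcal U$, where $d(A,B)=\inf\{d(a,b):a\in A,b\in B\}$. $B_r(x)$ denotes the open ball of radius $r$ about $x$. A subset $U\subset X$ is $(N,R)$-large scale doubling if for every $x\in X$ and every $r\ge R$, $B_{2r}(x)\cap U$ can be covered by $N$ balls of radius $r$ with centers in $X$. A family $\mathcal U$ of subsets of $X$ is weakly uniformly large scale doubling if there is $(N,R)$ such that each $U\in\mathcal U$ is $(N,R)$-large scale doubling. $X$ has weak hyperbolic property C if for every sequence $R_0,R_1,\dots$ of positive reals there exist $n\ge0$ and $R_i$-disjoint families $\mathcal U_i$ ($i=0,\dots,n$) such that $\bigcup_{i=0}^n\mathcal U_i$ is a weakly uniformly large scale doubling cover of $X$. Property A is Yu's coarse amenability property: for a (discrete) metric space $X$, for every $R>0$ and $\varepsilon>0$ there exist $S>0$ and a family $\{A_x\}_{x\in X}$ of finite nonempty subsets of $X\times\mathbb N$ such that $(x,1)\in A_x$ and $A_x\subset B_S(x)\times\mathbb N$ for all $x$, and $|A_x\triangle A_y|/|A_x\cap A_y|<\varepsilon$ whenever $d(x,y)<R$. *)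

From Stdlib Require Import Reals List.
Open Scope R_scope.

Record MetricSpace := {
  carrier :> Type;
  dist : carrier -> carrier -> R;
  dist_nonneg : forall x y, 0 <= dist x y;
  dist_eq0 : forall x y, dist x y = 0 <-> x = y;
  dist_sym : forall x y, dist x y = dist y x;
  dist_tri : forall x y z, dist x z <= dist x y + dist y z
}.

Section Defs.
Variable X : MetricSpace.

Definition subset := X -> Prop.
Definition family := subset -> Prop.

Definition ball (x : X) (r : R) : subset := fun y => dist X x y < r.

Definition same_set (A B : subset) : Prop := forall x, A x <-> B x.

(* d(A,B) > R, i.e. inf { d(a,b) : a in A, b in B } > R *)
Definition setdist_gt (A B : subset) (R0 : R) : Prop :=
  exists delta, R0 < delta /\ forall a b, A a -> B b -> delta <= dist X a b.

Definition R_disjoint (R0 : R) (U : family) : Prop :=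
  (forall A, U A -> exists x, A x) /\
  (forall A B, U A -> U B -> ~ same_set A B -> setdist_gt A B R0).

Definition ls_doubling (N : nat) (R0 : R) (U : subset) : Prop :=
  forall (x : X) (r : R), R0 <= r ->
    exists c : nat -> X,
      forall y, ball x (2 * r) y -> U y ->
        exists i, (i < N)%nat /\ ball (c i) r y.

Definition weakly_unif_ls_doubling (U : family) : Prop :=
  exists (N : nat) (R0 : R), forall A, U A -> ls_doubling N R0 A.

Definition is_cover (U : family) : Prop :=
  forall x : X, exists A, U A /\ A x.

Definition family_union (n : nat) (Us : nat -> family) : family :=
  fun A => exists i, (i <= n)%nat /\ Us i A.

Definition weak_hyperbolic_C : Prop :=
  forall Rs : nat -> R, (forall i, 0 < Rs i) ->
    exists (n : nat) (Us : nat -> family),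
      (forall i, (i <= n)%nat -> R_disjoint (Rs i) (Us i)) /\
      is_cover (family_union n Us) /\
      weakly_unif_ls_doubling (family_union n Us).

End Defs.

Definition has_card {T : Type} (P : T -> Prop) (n : nat) : Prop :=
  exists l : list T, NoDup l /\ (forall p, P p <-> In p l) /\ length l = n.

Definition is_finite {T : Type} (P : T -> Prop) : Prop := exists n, has_card P n.

Definition property_A (X : MetricSpace) : Prop :=
  forall R0 eps : R, 0 < R0 -> 0 < eps ->
    exists (S : R) (A : X -> (X * nat) -> Prop),
      0 < S /\
      (forall x, is_finite (A x)) /\
      (forall x, A x (x, 1%nat)) /\
      (forall x p, A x p -> dist X x (fst p) < S) /\
      (forall x y, dist X x y < R0 ->
         forall m k : nat,
           has_card (fun p => (A x p /\ ~ A y p) \/ (A y p /\ ~ A x p)) m ->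
           has_card (fun p => A x p /\ A y p) k ->
           INR m < eps * INR k).

(** Property A follows once, for all [R0] and [eta], each point [x] carries
    finitely many nonnegative weights, of total mass at least one, sitting on
    labelled points within a fixed distance of [x], such that the weights of
    [R0]-close points differ by at most [eta] in l1: rounding large multiples
    of the weights gives the finite sets of property A.

    Such weights come from weak hyperbolic property C applied with
    [R_i = 2^(i+1) Q R0].  At level [i] a point is [2^i Q R0]-close to at most
    one member [V] of [U_i], which gives it a mass decreasing linearly from 1
    on [V] to 0 at distance [2^i Q R0]; between [R0]-close points this costs
    at most [2^(1-i) / Q] in l1, hence at most [4 / Q] over all levels.  Inside
    [V] the mass is spread by a partition of unity: a greedy [4 s]-separated
    net of the [s]-neighbourhood of [V] can be coloured with [N^4 + 1] colours
    so that equally coloured net points are [14 s] apart ([V] being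
    [N]-doubling), and each colour contributes a ramp of height [Kp] around
    the unique net point of that colour near [x].  After normalisation these
    move by [O(N^4 / Kp)]. *)

From Pilot Require Import Defs.
From Stdlib Require Import Reals List Lra Lia Arith ZArith Cantor
  ClassicalEpsilon Classical PropExtensionality FunctionalExtensionality.
Import ListNotations.
Open Scope R_scope.

Notation dst x y := (Defs.dist _ x y).

Lemma dist_refl (X : MetricSpace) (x : X) : dst x x = 0.
Proof. now apply Defs.dist_eq0. Qed.

Lemma dist_tri_l (X : MetricSpace) (x y z : X) : dst y z <= dst x y + dst x z.
Proof. rewrite (Defs.dist_sym X x y). apply Defs.dist_tri. Qed.

Lemma dist_tri_r (X : MetricSpace) (x y z : X) : dst x y <= dst x z + dst y z.
Proof. rewrite (Defs.dist_sym X y z). apply Defs.dist_tri. Qed.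

Definition holds (P : Prop) : bool := if excluded_middle_informative P then true else false.

Lemma holdsP (P : Prop) : reflect P (holds P).
Proof. unfold holds; destruct excluded_middle_informative; now constructor. Qed.

Lemma holds_true (P : Prop) : P -> holds P = true.
Proof. now destruct (holdsP P). Qed.

Definition choose_opt {A : Type} (P : A -> Prop) : option A :=
  match excluded_middle_informative (exists a, P a) with
  | left H => Some (proj1_sig (constructive_indefinite_description P H))
  | right _ => None
  end.

Lemma choose_opt_some {A : Type} (P : A -> Prop) (a : A) : choose_opt P = Some a -> P a.
Proof.
  unfold choose_opt; destruct excluded_middle_informative as [H|H]; intros E; inversion E.
  exact (proj2_sig (constructive_indefinite_description P H)).
Qed.

Lemma choose_opt_none {A : Type} (P : A -> Prop) (a : A) : choose_opt P = None -> ~ P a.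
Proof.
  unfold choose_opt; destruct excluded_middle_informative as [H|H]; intros E; inversion E.
  intros Ha; apply H; now exists a.
Qed.

Lemma choose_opt_unique {A : Type} (P : A -> Prop) (a : A) :
  (forall b b', P b -> P b' -> b = b') -> P a -> choose_opt P = Some a.
Proof.
  intros Huniq Ha. destruct (choose_opt P) as [b|] eqn:E.
  - f_equal. apply Huniq; [apply (choose_opt_some P) | ]; auto.
  - exfalso; exact (choose_opt_none P a E Ha).
Qed.

Definition count_in (P : nat -> Prop) (l : list nat) : nat :=
  length (filter (fun t => holds (P t)) l).

Lemma count_in_cons P a l :
  count_in P (a :: l) = ((if holds (P a) then 1 else 0) + count_in P l)%nat.
Proof. unfold count_in; simpl; now destruct (holds (P a)). Qed.

Lemma count_in_app P l1 l2 : count_in P (l1 ++ l2) = (count_in P l1 + count_in P l2)%nat.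
Proof. unfold count_in; now rewrite filter_app, length_app. Qed.

Lemma count_in_full P l : (forall t, In t l -> P t) -> count_in P l = length l.
Proof.
  induction l as [|a l IH]; intros H; [reflexivity|].
  rewrite count_in_cons, holds_true, IH by (intros; apply H; simpl; auto). reflexivity.
Qed.

Lemma count_in_pos P l : (1 <= count_in P l)%nat -> exists t, In t l /\ P t.
Proof.
  unfold count_in; destruct (filter _ l) as [|t ft] eqn:E; simpl; intros Hc; [lia|].
  assert (Ht : In t (filter (fun t => holds (P t)) l)) by (rewrite E; left; auto).
  apply filter_In in Ht as [Ht Pt]. exists t; split; auto. now destruct (holdsP (P t)).
Qed.

Lemma count_in_shift P Q a K :
  (forall t, P t -> Q (S t)) -> (count_in P (seq a K) <= count_in Q (seq (S a) K))%nat.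
Proof.
  intros H; revert a; induction K as [|K IH]; intros a; [unfold count_in; simpl; lia|].
  cbn [seq]; rewrite !count_in_cons. specialize (IH (S a)).
  destruct (holdsP (P a)) as [Pa|]; destruct (holdsP (Q (S a))); try lia.
  exfalso; auto.
Qed.

(** With [P t] meaning [d(x, A) < t r], [ramp K P] is a profile in [x] equal to
    [K] near [A], vanishing at distance [K r] from it, and varying by at most one
    between points closer than [r]. *)
Definition ramp (K : nat) (P : nat -> Prop) : nat := count_in P (seq 1 K).

Lemma ramp_le K P : (ramp K P <= K)%nat.
Proof. unfold ramp, count_in. rewrite <- (length_seq K 1) at 2. apply filter_length_le. Qed.

Lemma ramp_full K P : (forall t, (1 <= t)%nat -> P t) -> ramp K P = K.
Proof.
  intros H; unfold ramp. rewrite count_in_full, length_seq; [reflexivity|].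
  intros t Ht; apply in_seq in Ht; apply H; lia.
Qed.

Lemma ramp_shift K P Q : (forall t, P t -> Q (S t)) -> (ramp K P <= S (ramp K Q))%nat.
Proof.
  intros H; unfold ramp. eapply Nat.le_trans; [apply (count_in_shift P Q 1 K H)|].
  assert (E : seq 1 K ++ [S K] = 1%nat :: seq 2 K) by (rewrite <- seq_S; reflexivity).
  assert (C := f_equal (count_in Q) E).
  rewrite count_in_app, (count_in_cons Q 1%nat) in C.
  assert (count_in Q [S K] <= 1)%nat by (unfold count_in; simpl; destruct (holds (Q (S K))); simpl; lia).
  destruct (holds (Q 1%nat)); lia.
Qed.

Lemma ramp_ge2 K P : (2 <= ramp K P)%nat -> exists t, (1 <= t < K)%nat /\ P t.
Proof.
  unfold ramp; intros H. destruct K as [|K]; [unfold count_in in H; simpl in H; lia|].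
  rewrite seq_S, count_in_app in H. unfold count_in at 2 in H; simpl in H.
  destruct (count_in_pos P (seq 1 K)) as [t [Ht Pt]]; [destruct holds; simpl in H; lia|].
  apply in_seq in Ht. exists t; split; [lia|auto].
Qed.

Lemma pigeonhole {A : Type} (l : list A) (m : nat) (Rel : A -> nat -> Prop) :
  NoDup l -> (forall a, In a l -> exists b, (b < m)%nat /\ Rel a b) ->
  (forall a a' b, In a l -> In a' l -> Rel a b -> Rel a' b -> a = a') ->
  (length l <= m)%nat.
Proof.
  intros Hnd Hex Hinj.
  assert (Himg : exists lb, length lb = length l /\ NoDup lb /\
            forall b, In b lb -> (b < m)%nat /\ exists a, In a l /\ Rel a b).
  { induction l as [|a l IH].
    - exists []; split; [reflexivity|split; [constructor|intros b []]].
    - inversion Hnd as [|? ? Ha Hl]; subst.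
      destruct IH as [lb [Hlen [Hlb Hin]]]; auto.
      { intros; apply Hex; simpl; auto. }
      { intros; eapply Hinj; simpl; eauto. }
      destruct (Hex a) as [b [Hb Rb]]; [simpl; auto|].
      exists (b :: lb); split; [simpl; congruence|split].
      + constructor; auto. intros Hbin. destruct (Hin b Hbin) as [_ [a' [Ha' Ra']]].
        assert (a = a') by (eapply Hinj; simpl; eauto). subst; contradiction.
      + intros b' [<-|Hb']; [split; auto; exists a; simpl; auto|].
        destruct (Hin b' Hb') as [? [a' [? ?]]]; split; auto; exists a'; simpl; auto. }
  destruct Himg as [lb [Hlen [Hlb Hin]]]. rewrite <- Hlen, <- (length_seq m 0).
  apply NoDup_incl_length; auto. intros b Hb; apply in_seq; destruct (Hin b Hb); lia.
Qed.

Definition mex (l : list nat) : nat :=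
  match find (fun t => negb (existsb (Nat.eqb t) l)) (seq 0 (S (length l))) with
  | Some t => t
  | None => 0
  end.

Lemma mex_spec l : (mex l <= length l)%nat /\ ~ In (mex l) l.
Proof.
  unfold mex. destruct (find _ _) as [t|] eqn:E.
  - apply find_some in E as [Ht Hfresh]. apply in_seq in Ht. split; [lia|].
    intros Hin. apply Bool.negb_true_iff in Hfresh.
    assert (existsb (Nat.eqb t) l = true)
      by (apply existsb_exists; exists t; split; auto; apply Nat.eqb_refl).
    congruence.
  - exfalso. assert (Hincl : incl (seq 0 (S (length l))) l).
    { intros t Ht. pose proof (find_none _ _ E t Ht) as Hf.
      apply Bool.negb_false_iff, existsb_exists in Hf as [u [Hu Htu]].
      apply Nat.eqb_eq in Htu; subst; auto. }
    apply NoDup_incl_length in Hincl; [|apply seq_NoDup]. rewrite length_seq in Hincl; lia.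
Qed.

Lemma is_finite_incl {T : Type} (l : list T) (P : T -> Prop) :
  (forall p, P p -> In p l) -> is_finite P.
Proof.
  intros H.
  assert (Hd : forall a b : T, {a = b} + {a <> b}) by (intros; apply excluded_middle_informative).
  set (lP := filter (fun p => holds (P p)) (nodup Hd l)).
  exists (length lP), lP. split; [apply NoDup_filter, NoDup_nodup|split; auto].
  intros p. unfold lP; rewrite filter_In, nodup_In.
  destruct (holdsP (P p)); split.
  - intros; split; auto.
  - tauto.
  - intros; contradiction.
  - intros [_ Hf]; discriminate.
Qed.

Lemma has_card_le_length {T : Type} (P : T -> Prop) (n : nat) (l : list T) :
  has_card P n -> (forall p, P p -> In p l) -> (n <= length l)%nat.
Proof.
  intros [l' [Hnd [HP <-]]] H. apply NoDup_incl_length; auto.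
  intros p Hp; apply H, HP; auto.
Qed.

Lemma length_le_has_card {T : Type} (P : T -> Prop) (n : nat) (l : list T) :
  has_card P n -> NoDup l -> (forall p, In p l -> P p) -> (length l <= n)%nat.
Proof.
  intros [l' [_ [HP <-]]] Hnd H. apply NoDup_incl_length; auto.
  intros p Hp; apply HP, H; auto.
Qed.

Lemma Rdiv_nonneg (a b : R) : 0 <= a -> 0 <= b -> 0 <= a / b.
Proof.
  intros Ha [Hb| <-]; unfold Rdiv.
  - apply Rmult_le_pos; auto. left; now apply Rinv_0_lt_compat.
  - rewrite Rinv_0; lra.
Qed.

Definition rsum {A : Type} (f : A -> R) (l : list A) : R :=
  fold_right (fun a acc => f a + acc) 0 l.

Section Rsum.
Context {A : Type}.
Implicit Types (f g : A -> R) (l : list A).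

Lemma rsum_app f l1 l2 : rsum f (l1 ++ l2) = rsum f l1 + rsum f l2.
Proof. induction l1; simpl; [lra|rewrite IHl1; lra]. Qed.

Lemma rsum_ext f g l : (forall a, In a l -> f a = g a) -> rsum f l = rsum g l.
Proof. induction l; simpl; intros H; auto. rewrite H, IHl; auto. Qed.

Lemma rsum_le f g l : (forall a, In a l -> f a <= g a) -> rsum f l <= rsum g l.
Proof.
  induction l as [|a l IH]; simpl; intros H; [lra|].
  pose proof (H a (or_introl eq_refl)). pose proof (IH (fun b Hb => H b (or_intror Hb))). lra.
Qed.

Lemma rsum_plus f g l : rsum (fun a => f a + g a) l = rsum f l + rsum g l.
Proof. induction l; simpl; [lra|rewrite IHl; lra]. Qed.

Lemma rsum_scal c f l : rsum (fun a => c * f a) l = c * rsum f l.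
Proof. induction l; simpl; [lra|rewrite IHl; lra]. Qed.

Lemma rsum_minus f g l : rsum (fun a => f a - g a) l = rsum f l - rsum g l.
Proof. induction l; simpl; [lra|rewrite IHl; lra]. Qed.

Lemma rsum_const c l : rsum (fun _ => c) l = c * INR (length l).
Proof.
  induction l as [|a l IH]; [simpl; lra|].
  change (rsum (fun _ => c) (a :: l)) with (c + rsum (fun _ => c) l).
  cbn [length]. rewrite IH, S_INR. ring.
Qed.

Lemma rsum_nonneg f l : (forall a, In a l -> 0 <= f a) -> 0 <= rsum f l.
Proof. intros H. rewrite <- (Rmult_0_l (INR (length l))), <- rsum_const. now apply rsum_le. Qed.

Lemma rsum_single f l a : In a l -> NoDup l -> (forall b, In b l -> 0 <= f b) -> f a <= rsum f l.
Proof.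
  induction l as [|b l IH]; simpl; intros Ha Hnd Hpos; [contradiction|].
  inversion Hnd; subst.
  assert (0 <= rsum f l) by (apply rsum_nonneg; auto).
  destruct Ha as [<-|Ha]; [lra|].
  pose proof (Hpos b (or_introl eq_refl)).
  pose proof (IH Ha ltac:(auto) (fun c Hc => Hpos c (or_intror Hc))). lra.
Qed.

Lemma rsum_abs f l : Rabs (rsum f l) <= rsum (fun a => Rabs (f a)) l.
Proof.
  induction l; simpl; [rewrite Rabs_R0; lra|].
  eapply Rle_trans; [apply Rabs_triang|lra].
Qed.

End Rsum.

Lemma rsum_flat_map {A B : Type} (f : B -> R) (g : A -> list B) (l : list A) :
  rsum f (flat_map g l) = rsum (fun a => rsum f (g a)) l.
Proof. induction l; [reflexivity|]. cbn [flat_map]. rewrite rsum_app, IHl; reflexivity. Qed.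

Lemma rsum_map {A B : Type} (f : B -> R) (g : A -> B) (l : list A) :
  rsum f (map g l) = rsum (fun a => f (g a)) l.
Proof. induction l as [|a l IH]; [reflexivity|]. unfold rsum in *; simpl; now rewrite IH. Qed.

Lemma INR_length_flat_map {A B : Type} (g : A -> list B) (l : list A) :
  INR (length (flat_map g l)) = rsum (fun a => INR (length (g a))) l.
Proof. induction l; [reflexivity|]. cbn [flat_map]. rewrite length_app, plus_INR, IHl; reflexivity. Qed.


Lemma NoDup_flat_map {A B : Type} (f : A -> list B) (l : list A) :
  NoDup l -> (forall a, In a l -> NoDup (f a)) ->
  (forall a a' b, In a l -> In a' l -> a <> a' -> In b (f a) -> ~ In b (f a')) ->
  NoDup (flat_map f l).
Proof.
  induction l as [|a l IH]; intros Hnd Hf Hdisj; simpl; [constructor|].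
  inversion Hnd; subst. apply NoDup_app.
  - apply Hf; simpl; auto.
  - apply IH; auto; [intros; apply Hf; simpl; auto|].
    intros a1 a2 b ? ? ?; apply Hdisj; simpl; auto.
  - intros b Hb Hb'. apply in_flat_map in Hb' as [a' [Ha' Hb']].
    apply (Hdisj a a' b); simpl; auto. intros <-; contradiction.
Qed.

Lemma floor_bounds (r : R) :
  0 <= r -> INR (Z.to_nat (Int_part r)) <= r < INR (Z.to_nat (Int_part r)) + 1.
Proof.
  intros H. destruct (base_Int_part r) as [H1 H2].
  assert (0 <= Int_part r)%Z.
  { destruct (Z_lt_le_dec (Int_part r) 0); auto.
    assert (IZR (Int_part r) <= -1) by (apply IZR_le; lia). lra. }
  rewrite INR_IZR_INZ, Z2Nat.id by auto. lra.
Qed.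

(** * Property A from l1-weights *)

(** The l1-distance between the point masses [a] and [b] sitting at two
    centres, [same] telling whether the centres coincide. *)
Definition mass_dist (same : bool) (a b : R) : R := if same then Rabs (a - b) else a + b.

Lemma mass_dist_nonneg same a b : 0 <= a -> 0 <= b -> 0 <= mass_dist same a b.
Proof. intros; destruct same; simpl; [apply Rabs_pos|lra]. Qed.

Lemma mass_dist_le_plus same a b : 0 <= a -> 0 <= b -> mass_dist same a b <= a + b.
Proof. intros; destruct same; simpl; [unfold Rabs; destruct Rcase_abs|]; lra. Qed.

Lemma Rabs_le_mass_dist same a b : 0 <= a -> 0 <= b -> Rabs (a - b) <= mass_dist same a b.
Proof. intros; destruct same; simpl; [lra|unfold Rabs; destruct Rcase_abs; lra]. Qed.

Lemma mass_dist_scale same p q a b : 0 <= p -> 0 <= q -> 0 <= a -> 0 <= b ->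
  mass_dist same (p * a) (q * b) <= Rabs (p - q) * b + p * mass_dist same a b.
Proof.
  intros. pose proof (Rle_abs (p - q)). pose proof (Rle_abs (-(p - q))). rewrite Rabs_Ropp in *.
  destruct same; simpl; [|nra].
  replace (p * a - q * b) with (p * (a - b) + (p - q) * b) by ring.
  eapply Rle_trans; [apply Rabs_triang|].
  rewrite !Rabs_mult, (Rabs_right p), (Rabs_right b) by lra. lra.
Qed.

(** The l1-distance between the measures [sum_l w x l * delta_(cen x l, l)]. *)
Definition weight_dist {X : MetricSpace} {L : Type} (ls : list L) (cen : X -> L -> X)
  (w : X -> L -> R) (x y : X) : R :=
  rsum (fun l => mass_dist (holds (cen x l = cen y l)) (w x l) (w y l)) ls.

(** Weights are indexed by labels (level, colour). *)
Definition label : Type := (nat * nat)%type.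

Definition has_l1_weights (X : MetricSpace) (R0 S eta : R) : Prop :=
  exists (ls : list label) (cen : X -> label -> X) (w : X -> label -> R),
    NoDup ls /\ (forall x l, 0 <= w x l) /\ (forall x l, dst x (cen x l) < S) /\
    (forall x, 1 <= rsum (w x) ls) /\
    (forall x y, dst x y < R0 -> weight_dist ls cen w x y <= eta).

(** Tag [1] is reserved for the point [(x, 1)] required by property A. *)
Definition tag (l : label) (m : nat) : nat := S (S (Cantor.to_nat (Cantor.to_nat l, m))).

Lemma tag_inj l m l' m' : tag l m = tag l' m' -> l = l' /\ m = m'.
Proof.
  unfold tag; intros H.
  assert (E : Cantor.to_nat (Cantor.to_nat l, m) = Cantor.to_nat (Cantor.to_nat l', m')) by lia.
  apply Cantor.to_nat_inj in E. injection E as E ->. now apply Cantor.to_nat_inj in E.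
Qed.

Section Discretisation.
Variables (X : MetricSpace) (ls : list label) (cen : X -> label -> X) (w : X -> label -> R) (T : R).
Hypothesis T_nonneg : 0 <= T.
Hypothesis w_nonneg : forall x l, 0 <= w x l.

Definition copies (x : X) (l : label) : nat := Z.to_nat (Int_part (T * w x l)).

Lemma copies_bounds x l : INR (copies x l) <= T * w x l < INR (copies x l) + 1.
Proof. apply floor_bounds, Rmult_le_pos; auto. Qed.

Definition tower (c : X) (l : label) (a n : nat) : list (X * nat) :=
  map (fun m => (c, tag l m)) (seq a n).

Lemma In_tower c l a n p : In p (tower c l a n) <-> exists m, (a <= m < a + n)%nat /\ p = (c, tag l m).
Proof.
  unfold tower; rewrite in_map_iff; split.
  - intros [m [<- Hm]]; apply in_seq in Hm; eauto.
  - intros [m [Hm ->]]; exists m; split; auto; apply in_seq; auto.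
Qed.

Lemma length_tower c l a n : length (tower c l a n) = n.
Proof. unfold tower; now rewrite length_map, length_seq. Qed.

Definition A_list (x : X) : list (X * nat) :=
  (x, 1%nat) :: flat_map (fun l => tower (cen x l) l 0 (copies x l)) ls.

Definition A_set (x : X) (p : X * nat) : Prop := In p (A_list x).

Lemma A_set_iff x p : A_set x p <->
  p = (x, 1%nat) \/ exists l m, In l ls /\ (m < copies x l)%nat /\ p = (cen x l, tag l m).
Proof.
  unfold A_set, A_list; simpl; rewrite in_flat_map; split.
  - intros [<-|[l [Hl Hp]]]; [now left|right].
    apply In_tower in Hp as [m [Hm ->]]; exists l, m; repeat split; auto; lia.
  - intros [->|[l [m [Hl [Hm ->]]]]]; [now left|right].
    exists l; split; auto. apply In_tower; exists m; split; auto; lia.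
Qed.

Definition same_centre (x y : X) (l : label) : bool := holds (cen x l = cen y l).

(** The part of the symmetric difference of [A_set x] and [A_set y] coming from label [l]. *)
Definition diff_tower (x y : X) (l : label) : list (X * nat) :=
  let a := copies x l in let b := copies y l in
  if same_centre x y l then tower (cen x l) l (Nat.min a b) (Nat.max a b - Nat.min a b)
  else tower (cen x l) l 0 a ++ tower (cen y l) l 0 b.

Definition common_tower (x y : X) (l : label) : list (X * nat) :=
  if same_centre x y l then tower (cen x l) l 0 (Nat.min (copies x l) (copies y l)) else [].

Lemma symdiff_incl x y p :
  (A_set x p /\ ~ A_set y p) \/ (A_set y p /\ ~ A_set x p) ->
  In p ((x, 1%nat) :: (y, 1%nat) :: flat_map (diff_tower x y) ls).
Proof.
  assert (K : forall a b, (a = x /\ b = y) \/ (a = y /\ b = x) -> A_set a p -> ~ A_set b p ->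
            p = (a, 1%nat) \/ exists l, In l ls /\ In p (diff_tower x y l)).
  { intros a b Hab Ha Hb. apply A_set_iff in Ha as [E|[l [m [Hl [Hm E]]]]]; [now left|right].
    exists l; split; auto. unfold diff_tower, same_centre.
    destruct (holdsP (cen x l = cen y l)) as [Ec|Ec].
    - apply In_tower. exists m. split.
      + assert (~ (m < copies b l)%nat).
        { intros Hmb; apply Hb, A_set_iff; right; exists l, m; repeat split; auto.
          rewrite E; f_equal; destruct Hab as [[-> ->]|[-> ->]]; congruence. }
        destruct Hab as [[-> ->]|[-> ->]]; lia.
      + rewrite E; f_equal; destruct Hab as [[-> ->]|[-> ->]]; congruence.
    - apply in_or_app. destruct Hab as [[-> ->]|[-> ->]]; [left|right];
        apply In_tower; exists m; split; auto; lia. }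
  intros [[H1 H2]|[H1 H2]].
  - destruct (K x y (or_introl (conj eq_refl eq_refl)) H1 H2) as [E|[l [Hl Hp]]]; [now left|].
    right; right; apply in_flat_map; eauto.
  - destruct (K y x (or_intror (conj eq_refl eq_refl)) H1 H2) as [E|[l [Hl Hp]]]; [now right; left|].
    right; right; apply in_flat_map; eauto.
Qed.

Lemma common_incl x y p : In p (flat_map (common_tower x y) ls) -> A_set x p /\ A_set y p.
Proof.
  rewrite in_flat_map; intros [l [Hl Hp]]. unfold common_tower, same_centre in Hp.
  destruct (holdsP (cen x l = cen y l)) as [Ec|]; [|contradiction].
  apply In_tower in Hp as [m [Hm ->]].
  split; apply A_set_iff; right; exists l, m; repeat split; auto; try lia. now rewrite Ec.
Qed.

Lemma common_nodup x y : NoDup ls -> NoDup (flat_map (common_tower x y) ls).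
Proof.
  intros Hls. apply NoDup_flat_map; auto.
  - intros l _. unfold common_tower; destruct same_centre; [|constructor].
    apply NoDup_map_NoDup_ForallPairs; [|apply seq_NoDup].
    intros m m' _ _ E. apply (f_equal snd) in E; cbn [snd] in E. now apply tag_inj in E.
  - intros l l' p _ _ Hll' Hp Hp'. unfold common_tower in Hp, Hp'.
    destruct same_centre; [|contradiction]. destruct same_centre; [|contradiction].
    apply In_tower in Hp as [m [_ ->]]. apply In_tower in Hp' as [m' [_ E]].
    apply (f_equal snd) in E; cbn [snd] in E. apply tag_inj in E. tauto.
Qed.

Lemma length_diff_tower x y l :
  INR (length (diff_tower x y l)) <= T * mass_dist (same_centre x y l) (w x l) (w y l) + 1.
Proof.
  unfold diff_tower, mass_dist. destruct (copies_bounds x l), (copies_bounds y l).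
  destruct same_centre.
  - rewrite length_tower.
    assert (T * (w x l - w y l) <= T * Rabs (w x l - w y l))
      by (apply Rmult_le_compat_l; auto; apply Rle_abs).
    assert (T * (w y l - w x l) <= T * Rabs (w x l - w y l))
      by (apply Rmult_le_compat_l; auto; rewrite Rabs_minus_sym; apply Rle_abs).
    destruct (Nat.le_ge_cases (copies x l) (copies y l)).
    + rewrite Nat.max_r, Nat.min_l, minus_INR by auto. lra.
    + rewrite Nat.max_l, Nat.min_r, minus_INR by auto. lra.
  - rewrite length_app, !length_tower, plus_INR. lra.
Qed.

Lemma length_common_tower x y l :
  2 * INR (length (common_tower x y l)) =
  INR (copies x l) + INR (copies y l) - INR (length (diff_tower x y l)).
Proof.
  unfold common_tower, diff_tower. destruct same_centre.
  - rewrite !length_tower. destruct (Nat.le_ge_cases (copies x l) (copies y l)).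
    + rewrite Nat.max_r, Nat.min_l, minus_INR by auto. lra.
    + rewrite Nat.max_l, Nat.min_r, minus_INR by auto. lra.
  - rewrite length_app, !length_tower, plus_INR. simpl. lra.
Qed.

Lemma sum_copies_ge x : T * rsum (w x) ls - INR (length ls) <= rsum (fun l => INR (copies x l)) ls.
Proof.
  rewrite <- rsum_scal, <- (Rmult_1_l (INR (length ls))), <- rsum_const, <- rsum_minus.
  apply rsum_le; intros l _. destruct (copies_bounds x l); lra.
Qed.

Lemma A_set_counts x y eta m k : NoDup ls -> weight_dist ls cen w x y <= eta ->
  has_card (fun p => (A_set x p /\ ~ A_set y p) \/ (A_set y p /\ ~ A_set x p)) m ->
  has_card (fun p => A_set x p /\ A_set y p) k ->
  INR m <= 2 + T * eta + INR (length ls) /\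
  T * rsum (w x) ls + T * rsum (w y) ls - 3 * INR (length ls) - T * eta <= 2 * INR k.
Proof.
  intros Hls Hd Hm Hk.
  set (D := rsum (fun l => INR (length (diff_tower x y l))) ls).
  assert (HD : D <= T * eta + INR (length ls)).
  { unfold D. eapply Rle_trans.
    { apply (rsum_le _ (fun l => T * mass_dist (same_centre x y l) (w x l) (w y l) + 1)).
      intros; apply length_diff_tower. }
    rewrite rsum_plus, rsum_scal, rsum_const.
    assert (T * weight_dist ls cen w x y <= T * eta) by (apply Rmult_le_compat_l; auto).
    unfold weight_dist, same_centre in *. lra. }
  split.
  - apply has_card_le_length with (l := (x, 1%nat) :: (y, 1%nat) :: flat_map (diff_tower x y) ls) in Hm;
      [|apply symdiff_incl].
    apply le_INR in Hm. eapply Rle_trans; [exact Hm|].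
    simpl length; rewrite !S_INR, INR_length_flat_map. fold D. lra.
  - assert (Hk' := length_le_has_card _ _ _ Hk (common_nodup x y Hls) (common_incl x y)).
    apply le_INR in Hk'. rewrite INR_length_flat_map in Hk'.
    assert (E : 2 * rsum (fun l => INR (length (common_tower x y l))) ls =
                rsum (fun l => INR (copies x l)) ls + rsum (fun l => INR (copies y l)) ls - D).
    { rewrite <- rsum_scal, (rsum_ext _ _ _ (fun l _ => length_common_tower x y l)).
      unfold D; now rewrite rsum_minus, rsum_plus. }
    pose proof (sum_copies_ge x); pose proof (sum_copies_ge y). lra.
Qed.

End Discretisation.

Lemma property_A_of_l1_weights (X : MetricSpace) :
  (forall R0 eta, 0 < R0 -> 0 < eta -> exists S, 0 < S /\ has_l1_weights X R0 S eta) ->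
  property_A X.
Proof.
  intros Hw R0 eps HR Heps.
  (* The symmetric difference is about [T eta], the intersection about [T (1 - eta / 2)]. *)
  set (eta := eps / (2 + eps)).
  assert (Heta : 0 < eta) by (apply Rdiv_lt_0_compat; lra).
  assert (Hee : eta * (2 + eps) = eps) by (unfold eta; field; lra).
  destruct (Hw R0 eta HR Heta) as [S [HS [ls [cen [w [Hls [Hw0 [Hcen [Hmass Hdist]]]]]]]]].
  set (B := INR (length ls)). assert (HB : 0 <= B) by apply pos_INR.
  (* [T] is large enough that the rounding errors, of size [length ls], are negligible. *)
  set (T := (2 * (2 + B) + 3 * B * eps) / eps + 1).
  assert (HTe : T * eps = 2 * (2 + B) + 3 * B * eps + eps) by (unfold T; field; lra).
  assert (HT : 0 <= T) by (apply Rmult_le_reg_r with eps; nra).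
  exists S, (A_set X ls cen w T). split; [auto|split; [|split; [|split]]].
  - intros x; apply (is_finite_incl (A_list X ls cen w T x)); auto.
  - intros x; apply A_set_iff; now left.
  - intros x p Hp. apply A_set_iff in Hp as [->|[l [m [_ [_ ->]]]]]; simpl; auto.
    rewrite dist_refl; lra.
  - intros x y Hxy m k Hm Hk.
    destruct (A_set_counts X ls cen w T HT Hw0 x y eta m k Hls (Hdist x y Hxy) Hm Hk) as [C1 C2].
    fold B in C1, C2. pose proof (Hmass x); pose proof (Hmass y).
    assert (T * rsum (w x) ls >= T) by nra. assert (T * rsum (w y) ls >= T) by nra.
    nra.
Qed.

(** * A coloured separated net in a doubling set *)

Lemma exists_pow2_gt (r s : R) : 0 < s -> exists m, r < 2 ^ m * s.
Proof.
  intros Hs. destruct (archimed (r / s)) as [H _].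
  assert (Hpow : forall n, INR n <= 2 ^ n).
  { induction n; [simpl; lra|]. rewrite S_INR; simpl. pose proof (pow_R1_Rle 2 n). lra. }
  exists (Z.to_nat (up (r / s))).
  assert (r / s < 2 ^ Z.to_nat (up (r / s))).
  { destruct (Z_lt_le_dec (up (r / s)) 0).
    - assert (IZR (up (r / s)) <= 0) by (apply IZR_le; lia).
      pose proof (pow_lt 2 (Z.to_nat (up (r / s)))). lra.
    - rewrite <- (Z2Nat.id (up (r / s))), <- INR_IZR_INZ in H by auto.
      pose proof (Hpow (Z.to_nat (up (r / s)))). lra. }
  apply Rmult_lt_compat_r with (r := s) in H0; auto.
  unfold Rdiv in H0; rewrite Rmult_assoc, Rinv_l, Rmult_1_r in H0; lra.
Qed.

Lemma NoDup_map_filter {A B : Type} (f : A -> B) (g : A -> bool) (l : list A) :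
  NoDup (map f l) -> NoDup (map f (filter g l)).
Proof.
  induction l as [|a l IH]; simpl; auto. intros H; inversion H as [|? ? Ha Hl]; subst.
  destruct (g a); simpl; auto. constructor; auto.
  intros Hin; apply Ha. apply in_map_iff in Hin as [b [E Hb]].
  apply filter_In in Hb. apply in_map_iff; exists b; tauto.
Qed.

Section ColouredNet.
Variables (X : MetricSpace) (V : subset X) (N : nat) (R1 s : R) (x0 : X).

Definition doubling_centres (x : X) (r : R) (c : nat -> X) : Prop :=
  forall y, ball X x (2 * r) y -> V y -> exists i, (i < N)%nat /\ ball X (c i) r y.

Definition centres (x : X) (r : R) : nat -> X :=
  epsilon (inhabits (fun _ => x)) (doubling_centres x r).

Fixpoint cover (x : X) (m : nat) : list X :=
  match m with
  | 0 => [x]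
  | S m' => flat_map (fun i => cover (centres x (2 ^ m' * s) i) m') (seq 0 N)
  end.

(** Enumerates the union over [m] of the covers [cover x0 m], a countable [s]-net of [V]. *)
Definition candidate (k : nat) : X := let (m, i) := Cantor.of_nat k in nth i (cover x0 m) x0.

Definition relevant (k : nat) : Prop := exists v, V v /\ dst (candidate k) v < s.

Definition near_selected (k : nat) (p : nat * nat) : bool :=
  holds (dst (candidate (fst p)) (candidate k) < 14 * s).

Definition select_step (sel : list (nat * nat)) (k : nat) : list (nat * nat) :=
  if holds (relevant k /\ forall p, In p sel -> 4 * s <= dst (candidate (fst p)) (candidate k))
  then (k, mex (map snd (filter (near_selected k) sel))) :: sel
  else sel.

Fixpoint selection (k : nat) : list (nat * nat) :=
  match k with 0 => [] | S k' => select_step (selection k') k' end.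

Definition selected (j c : nat) : Prop := In (j, c) (selection (S j)).

Lemma In_selection k j c : In (j, c) (selection k) -> (j < k)%nat /\ selected j c.
Proof.
  induction k as [|k IH]; [simpl; contradiction|]. intros H. pose proof H as H'.
  simpl in H'; unfold select_step in H'. destruct holds.
  - destruct H' as [E|H']; [injection E as <- <-; split; [lia|exact H]|].
    destruct (IH H'); split; auto; lia.
  - destruct (IH H'); split; auto; lia.
Qed.

Lemma selection_mono k k' p : (k <= k')%nat -> In p (selection k) -> In p (selection k').
Proof. induction 1; auto. intros H'; simpl; unfold select_step; destruct holds; simpl; auto. Qed.

Lemma selected_inv j c : selected j c ->
  relevant j /\ (forall p, In p (selection j) -> 4 * s <= dst (candidate (fst p)) (candidate j)) /\
  c = mex (map snd (filter (near_selected j) (selection j))).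
Proof.
  unfold selected; simpl; unfold select_step.
  match goal with |- context [holds ?P] => destruct (holdsP P) as [Hj|Hj] end; intros H.
  - destruct H as [E|H]; [injection E as <-; tauto|]. apply In_selection in H; lia.
  - apply In_selection in H; lia.
Qed.

Lemma selected_sep j c j' c' : selected j c -> selected j' c' -> (j < j')%nat ->
  4 * s <= dst (candidate j) (candidate j') /\
  (dst (candidate j) (candidate j') < 14 * s -> c <> c').
Proof.
  intros H H' Hlt. destruct (selected_inv j' c' H') as [_ [Hsep Hc']].
  assert (Hin : In (j, c) (selection j')) by (apply (selection_mono (S j)); auto).
  split; [apply (Hsep (j, c) Hin)|]. intros Hd <-.
  destruct (mex_spec (map snd (filter (near_selected j') (selection j')))) as [_ Hfresh].
  rewrite <- Hc' in Hfresh. apply Hfresh, in_map_iff. exists (j, c); split; auto.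
  apply filter_In; split; auto. now apply holds_true.
Qed.

Lemma selection_nodup k : NoDup (map fst (selection k)).
Proof.
  induction k as [|k IH]; simpl; [constructor|]. unfold select_step; destruct holds; auto.
  simpl; constructor; auto. intros Hin; apply in_map_iff in Hin as [[j c] [E Hin]]; simpl in E; subst.
  apply In_selection in Hin; lia.
Qed.

Hypothesis s_pos : 0 < s.

Lemma relevant_near_selected k : relevant k ->
  exists j c, selected j c /\ dst (candidate j) (candidate k) < 4 * s.
Proof.
  intros Hr.
  destruct (classic (forall p, In p (selection k) -> 4 * s <= dst (candidate (fst p)) (candidate k)))
    as [H|H].
  - exists k, (mex (map snd (filter (near_selected k) (selection k)))). split.
    + unfold selected; simpl; unfold select_step. rewrite holds_true by auto. now left.
    + rewrite dist_refl; lra.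
  - apply not_all_ex_not in H as [[j c] H]. apply imply_to_and in H as [Hin H].
    apply In_selection in Hin. exists j, c. split; [tauto|]. simpl in H; lra.
Qed.

Hypothesis V_doubling : ls_doubling X N R1 V.
Hypothesis R1_le_s : R1 <= s.

Lemma centres_spec x r : R1 <= r -> doubling_centres x r (centres x r).
Proof. intros Hr. unfold centres. apply epsilon_spec, V_doubling, Hr. Qed.

Lemma cover_spec m x v : dst x v < 2 ^ m * s -> V v -> exists c, In c (cover x m) /\ dst c v < s.
Proof.
  revert x; induction m as [|m IH]; intros x Hd Hv.
  - exists x; simpl; split; auto; lra.
  - assert (Hr : R1 <= 2 ^ m * s) by (pose proof (pow_R1_Rle 2 m); nra).
    destruct (centres_spec x (2 ^ m * s) Hr v) as [i [Hi Hb]]; [unfold ball; simpl in Hd; lra|auto|].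
    destruct (IH _ Hb Hv) as [c [Hc Hcv]]. exists c; split; auto.
    simpl; apply in_flat_map. exists i; split; auto. apply in_seq; lia.
Qed.

Lemma length_cover m x : (length (cover x m) <= N ^ m)%nat.
Proof.
  revert x; induction m as [|m IH]; intros x; simpl; auto.
  assert (H : forall l : list nat,
             (length (flat_map (fun i => cover (centres x (2 ^ m * s) i) m) l) <= length l * N ^ m)%nat).
  { induction l as [|a l IHl]; simpl; auto. rewrite length_app.
    specialize (IH (centres x (2 ^ m * s) a)). lia. }
  specialize (H (seq 0 N)). rewrite length_seq in H. lia.
Qed.

Lemma candidate_near v : V v -> exists k, dst (candidate k) v < s.
Proof.
  intros Hv. destruct (exists_pow2_gt (dst x0 v) s s_pos) as [m Hm].
  destruct (cover_spec m x0 v Hm Hv) as [c [Hc Hcv]]. apply (In_nth _ _ x0) in Hc as [i [_ E]].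
  exists (Cantor.to_nat (m, i)). unfold candidate. rewrite Cantor.cancel_of_to, E; auto.
Qed.

Lemma selected_near x v : V v -> dst x v < s -> exists j c, selected j c /\ dst x (candidate j) < 6 * s.
Proof.
  intros Hv Hxv. destruct (candidate_near v Hv) as [k Hk].
  destruct (relevant_near_selected k) as [j [c [Hs Hd]]]; [exists v; split; auto|].
  exists j, c; split; auto.
  pose proof (Defs.dist_tri X x (candidate k) (candidate j)) as T1.
  pose proof (dist_tri_r X x (candidate k) v) as T2.
  rewrite (Defs.dist_sym X (candidate k) (candidate j)) in T1. lra.
Qed.

(** The selected points [14 s]-close to a candidate are [4 s]-separated and lie
    near [V], so each is [s]-close to a distinct point of a cover of radius [16 s]. *)
Lemma near_selected_count j :
  (length (filter (near_selected j) (selection j)) <= N ^ 4)%nat.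
Proof.
  set (F := filter (near_selected j) (selection j)).
  set (cov := cover (candidate j) 4).
  assert (HF : forall i, In i (map fst F) ->
                 (exists c, selected i c) /\ relevant i /\ dst (candidate i) (candidate j) < 14 * s).
  { intros i Hi. apply in_map_iff in Hi as [[i' c] [E Hi]]; simpl in E; subst i'.
    apply filter_In in Hi as [Hi Hn]. unfold near_selected in Hn; simpl in Hn.
    destruct (holdsP (dst (candidate i) (candidate j) < 14 * s)); [|discriminate].
    apply In_selection in Hi as [_ Hsel]. repeat split; eauto. apply (selected_inv i c Hsel). }
  rewrite <- (length_map fst F). eapply Nat.le_trans; [|apply (length_cover 4 (candidate j))].
  apply (pigeonhole _ _ (fun i b => exists v, V v /\ dst (candidate i) v < s /\
                                               dst (nth b cov x0) v < s)).
  - apply NoDup_map_filter, selection_nodup.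
  - intros i Hi. destruct (HF i Hi) as [_ [[v [Hv Hiv]] Hij]].
    destruct (cover_spec 4 (candidate j) v) as [c [Hc Hcv]]; auto.
    { pose proof (Defs.dist_tri X (candidate j) (candidate i) v).
      rewrite Defs.dist_sym in Hij. simpl; lra. }
    apply (In_nth _ _ x0) in Hc as [b [Hb E]]. exists b; split; auto.
    exists v; subst cov; rewrite E; auto.
  - intros i i' b Hi Hi' [v [Hv [H1 H2]]] [v' [Hv' [H1' H2']]].
    destruct (HF i Hi) as [[ci Si] _]; destruct (HF i' Hi') as [[ci' Si'] _].
    assert (dst (candidate i) (candidate i') < 4 * s).
    { pose proof (Defs.dist_tri X (candidate i) v (candidate i')).
      pose proof (dist_tri_l X (nth b cov x0) v (candidate i')).
      pose proof (dist_tri_r X (nth b cov x0) (candidate i') v'). lra. }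
    destruct (Nat.lt_total i i') as [Hlt|[Heq|Hlt]]; auto.
    + destruct (selected_sep i ci i' ci' Si Si' Hlt); lra.
    + destruct (selected_sep i' ci' i ci Si' Si Hlt) as [Hsep _]. rewrite Defs.dist_sym in Hsep; lra.
Qed.

Definition colours : nat := (N ^ 4 + 1)%nat.

Lemma selected_colour_lt j c : selected j c -> (c < colours)%nat.
Proof.
  intros H. destruct (selected_inv j c H) as [_ [_ ->]].
  destruct (mex_spec (map snd (filter (near_selected j) (selection j)))) as [Hm _].
  rewrite length_map in Hm. pose proof (near_selected_count j). unfold colours; lia.
Qed.

End ColouredNet.

(** * Ramps attached to a uniquely determined owner *)

Definition close_to {X : MetricSpace} (A : subset X) (r : R) (x : X) : Prop :=
  exists a, A a /\ dst x a < r.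

Section OwnedRamp.
Variables (X : MetricSpace) (O : Type) (K : nat) (r : R).
Variables (near : X -> O -> Prop) (reach : X -> O -> nat -> Prop).
Hypothesis near_unique : forall x o o', near x o -> near x o' -> o = o'.
Hypothesis reach_shift : forall x y o t, dst x y < r -> reach x o t -> reach y o (S t).
Hypothesis reach_near : forall x y o t, near x o -> (t <= K)%nat -> reach y o t -> near y o.

Definition owner (x : X) : option O := choose_opt (near x).

Definition owned_ramp (x : X) : nat :=
  match owner x with Some o => ramp K (reach x o) | None => 0%nat end.

Lemma owner_eq x o : near x o -> owner x = Some o.
Proof. apply choose_opt_unique, near_unique. Qed.

Lemma owned_ramp_le x : (owned_ramp x <= K)%nat.
Proof. unfold owned_ramp; destruct owner; [apply ramp_le|lia]. Qed.

Lemma owned_ramp_full x o : near x o -> (forall t, (1 <= t)%nat -> reach x o t) -> owned_ramp x = K.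
Proof. intros Hn Hr. unfold owned_ramp; rewrite (owner_eq x o Hn). now apply ramp_full. Qed.

Lemma owned_ramp_shift x y : dst x y < r -> owner x = owner y ->
  (owned_ramp x <= S (owned_ramp y))%nat.
Proof.
  intros Hxy E. unfold owned_ramp; rewrite <- E. destruct owner; [|lia].
  apply ramp_shift. intros t; apply reach_shift; auto.
Qed.

Lemma owned_ramp_lipschitz x y : dst x y < r -> owner x = owner y ->
  Rabs (INR (owned_ramp x) - INR (owned_ramp y)) <= 1.
Proof.
  intros Hxy E. assert (Hyx : dst y x < r) by (rewrite Defs.dist_sym; auto).
  pose proof (le_INR _ _ (owned_ramp_shift x y Hxy E)).
  pose proof (le_INR _ _ (owned_ramp_shift y x Hyx (eq_sym E))). rewrite S_INR in *.
  unfold Rabs; destruct Rcase_abs; lra.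
Qed.

Lemma owned_ramp_handoff x y : dst x y < r -> owner x <> owner y -> (owned_ramp x <= 1)%nat.
Proof.
  intros Hxy Hne. unfold owned_ramp. destruct (owner x) as [o|] eqn:Ex; [|lia].
  destruct (Nat.le_gt_cases (ramp K (reach x o)) 1) as [|Hgt]; auto. exfalso.
  destruct (ramp_ge2 K _ Hgt) as [t [Ht Hreach]].
  apply Hne. symmetry. apply owner_eq.
  apply (reach_near x y o (S t)); [apply (choose_opt_some (near x)), Ex|lia|now apply (reach_shift x)].
Qed.

Lemma owned_ramp_small x y : dst x y < r -> ~ (exists o, owner x = Some o /\ owner y = Some o) ->
  (owned_ramp x <= 1)%nat.
Proof.
  intros Hxy Hno.
  destruct (classic (owner x = owner y)) as [E|Hne]; [|now apply (owned_ramp_handoff x y)].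
  unfold owned_ramp; destruct (owner x) as [o|] eqn:Ex; [|lia].
  exfalso; apply Hno; exists o; split; congruence.
Qed.

Lemma owned_ramp_mass_dist same x y : dst x y < r ->
  (forall o, owner x = Some o -> owner y = Some o -> same = true) ->
  mass_dist same (INR (owned_ramp x)) (INR (owned_ramp y)) <= 2.
Proof.
  intros Hxy Hsame. assert (Hyx : dst y x < r) by (rewrite Defs.dist_sym; auto).
  destruct (classic (exists o, owner x = Some o /\ owner y = Some o)) as [[o [Ex Ey]]|Hno].
  - rewrite (Hsame o Ex Ey). simpl.
    pose proof (owned_ramp_lipschitz x y Hxy ltac:(congruence)). lra.
  - pose proof (le_INR _ _ (owned_ramp_small x y Hxy Hno)).
    assert (Hno' : ~ (exists o, owner y = Some o /\ owner x = Some o)) by firstorder.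
    pose proof (le_INR _ _ (owned_ramp_small y x Hyx Hno')).
    eapply Rle_trans; [apply mass_dist_le_plus; apply pos_INR|]. simpl in *; lra.
Qed.

End OwnedRamp.

Lemma mass_dist_normalise {A : Type} (same : A -> bool) (a b : A -> R) (l : list A) :
  (forall i, 0 <= a i) -> (forall i, 0 <= b i) -> 0 < rsum a l -> 0 < rsum b l ->
  rsum (fun i => mass_dist (same i) (a i / rsum a l) (b i / rsum b l)) l <=
  2 * rsum (fun i => mass_dist (same i) (a i) (b i)) l / rsum a l.
Proof.
  intros Ha Hb HA HB. set (SA := rsum a l) in *; set (SB := rsum b l) in *.
  set (D := rsum (fun i => mass_dist (same i) (a i) (b i)) l).
  assert (HSA : 0 < / SA) by (apply Rinv_0_lt_compat; auto).
  assert (HSB : 0 < / SB) by (apply Rinv_0_lt_compat; auto).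
  assert (Hgap : Rabs (SA - SB) <= D).
  { unfold SA, SB, D; rewrite <- rsum_minus. eapply Rle_trans; [apply rsum_abs|].
    apply rsum_le; intros; apply Rabs_le_mass_dist; auto. }
  eapply Rle_trans.
  { apply (rsum_le _ (fun i => Rabs (/ SA - / SB) * b i + / SA * mass_dist (same i) (a i) (b i))).
    intros i _. unfold Rdiv; rewrite (Rmult_comm (a i)), (Rmult_comm (b i)).
    apply mass_dist_scale; auto; lra. }
  rewrite rsum_plus, !rsum_scal. fold SB D.
  assert (E : Rabs (/ SA - / SB) * SB = Rabs (SA - SB) / SA).
  { replace (/ SA - / SB) with ((SB - SA) * / SA * / SB) by (field; lra).
    rewrite !Rabs_mult, (Rabs_right (/ SA)), (Rabs_right (/ SB)), Rabs_minus_sym by lra.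
    field; lra. }
  rewrite E. unfold Rdiv. nra.
Qed.

(** * The partition of unity inside one doubling set *)

Section InnerWeights.
Variables (X : MetricSpace) (V : subset X) (N : nat) (R1 s : R) (x0 : X) (Kp : nat) (r : R).
Local Notation candidate := (candidate X V N s x0).
Local Notation selected := (selected X V N s x0).

Definition anchored (col : nat) (x : X) (j : nat) : Prop :=
  selected j col /\ dst x (candidate j) < 7 * s.

Definition anchor_reach (x : X) (j t : nat) : Prop := dst x (candidate j) < 6 * s + INR t * r.

Definition bump (x : X) (col : nat) : nat := owned_ramp X nat Kp (anchored col) anchor_reach x.

Definition bump_centre (x : X) (col : nat) : X :=
  match owner X nat (anchored col) x with Some j => candidate j | None => x end.

Definition bump_total (x : X) : R := rsum (fun col => INR (bump x col)) (seq 0 (colours N)).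

Definition inner_weight (x : X) (col : nat) : R := INR (bump x col) / bump_total x.

Hypothesis s_pos : 0 < s.
Hypothesis V_doubling : ls_doubling X N R1 V.
Hypothesis R1_le_s : R1 <= s.
Hypothesis r_pos : 0 < r.
Hypothesis Kp_r_le_s : INR Kp * r <= s.
Hypothesis Kp_pos : (1 <= Kp)%nat.

Lemma anchored_unique col x j j' : anchored col x j -> anchored col x j' -> j = j'.
Proof.
  intros [S1 D1] [S2 D2]. pose proof (dist_tri_l X x (candidate j) (candidate j')).
  destruct (Nat.lt_total j j') as [Hlt|[Heq|Hlt]]; auto; exfalso.
  - destruct (selected_sep X V N s x0 j col j' col S1 S2 Hlt) as [_ Hc]. apply Hc; auto; lra.
  - destruct (selected_sep X V N s x0 j' col j col S2 S1 Hlt) as [_ Hc].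
    rewrite Defs.dist_sym in Hc. apply Hc; auto; lra.
Qed.

Lemma anchor_reach_shift x y j t : dst x y < r -> anchor_reach x j t -> anchor_reach y j (S t).
Proof.
  unfold anchor_reach; intros Hxy H. rewrite S_INR.
  pose proof (dist_tri_l X x y (candidate j)). lra.
Qed.

Lemma anchor_reach_anchored col x y j t :
  anchored col x j -> (t <= Kp)%nat -> anchor_reach y j t -> anchored col y j.
Proof.
  intros [Hs _] Ht Hr; split; auto. unfold anchor_reach in Hr.
  apply le_INR in Ht. assert (INR t * r <= INR Kp * r) by (apply Rmult_le_compat_r; lra). lra.
Qed.

Lemma bump_total_ge x : close_to V s x -> INR Kp <= bump_total x.
Proof.
  intros [v [Hv Hxv]].
  destruct (selected_near X V N R1 s x0 s_pos V_doubling R1_le_s x v Hv Hxv) as [j [c [Hj Hxj]]].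
  assert (Hfull : bump x c = Kp).
  { apply (owned_ramp_full X nat Kp (anchored c) anchor_reach (anchored_unique c) x j);
      [split; auto; lra|].
    intros t Ht. unfold anchor_reach. apply le_INR in Ht. simpl in Ht. nra. }
  unfold bump_total. rewrite <- Hfull. apply (rsum_single (fun col => INR (bump x col))).
  - apply in_seq. pose proof (selected_colour_lt X V N R1 s x0 s_pos V_doubling R1_le_s j c Hj). lia.
  - apply seq_NoDup.
  - intros; apply pos_INR.
Qed.

Lemma bump_total_pos x : close_to V s x -> 0 < bump_total x.
Proof. intros H. pose proof (bump_total_ge x H). apply lt_0_INR in Kp_pos. lra. Qed.

Lemma inner_weight_nonneg x col : 0 <= inner_weight x col.
Proof.
  apply Rdiv_nonneg; [apply pos_INR|]. apply rsum_nonneg; intros; apply pos_INR.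
Qed.

Lemma inner_weight_sum x : close_to V s x -> rsum (inner_weight x) (seq 0 (colours N)) = 1.
Proof.
  intros H. pose proof (bump_total_pos x H). unfold inner_weight, Rdiv.
  rewrite (rsum_ext _ (fun col => / bump_total x * INR (bump x col))) by (intros; ring).
  rewrite rsum_scal. fold (bump_total x). field. lra.
Qed.

Lemma inner_weight_dist x y : close_to V s x -> close_to V s y -> dst x y < r ->
  weight_dist (seq 0 (colours N)) bump_centre inner_weight x y <= 4 * INR (colours N) / INR Kp.
Proof.
  intros Hx Hy Hxy. unfold weight_dist. pose proof (bump_total_ge x Hx). apply lt_0_INR in Kp_pos as HK.
  eapply Rle_trans.
  { apply (mass_dist_normalise _ (fun col => INR (bump x col)) (fun col => INR (bump y col)));
      intros; try apply pos_INR; now apply bump_total_pos. }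
  assert (Hsum : rsum (fun col => mass_dist (holds (bump_centre x col = bump_centre y col))
                          (INR (bump x col)) (INR (bump y col))) (seq 0 (colours N)) <= 2 * INR (colours N)).
  { rewrite <- (length_seq (colours N) 0) at 2. rewrite <- rsum_const. apply rsum_le; intros col _.
    apply (owned_ramp_mass_dist X nat Kp r (anchored col) anchor_reach); auto.
    - apply anchored_unique.
    - intros; eapply anchor_reach_shift; eauto.
    - intros; eapply anchor_reach_anchored; eauto.
    - intros j Ex Ey; apply holds_true. unfold bump_centre; now rewrite Ex, Ey. }
  fold (bump_total x). unfold Rdiv.
  apply Rle_trans with (2 * (2 * INR (colours N)) * / INR Kp).
  - apply Rle_trans with (2 * (2 * INR (colours N)) * / bump_total x).
    + apply Rmult_le_compat_r; [left; apply Rinv_0_lt_compat; lra|lra].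
    + apply Rmult_le_compat_l; [pose proof (pos_INR (colours N)); lra|apply Rinv_le_contravar; lra].
  - lra.
Qed.

End InnerWeights.

(** * Weights from weak hyperbolic property C *)

Definition scale (Q i : nat) : nat := (Q * 2 ^ i)%nat.

Lemma scale_pos Q i : (1 <= Q)%nat -> 0 < INR (scale Q i).
Proof. intros HQ. apply lt_0_INR. unfold scale. pose proof (Nat.pow_nonzero 2 i). nia. Qed.

Section LevelWeights.
Variables (X : MetricSpace) (R0 : R) (Q n : nat) (Us : nat -> Defs.family X).
Variables (N : nat) (R1 s : R) (x0 : X) (Kp : nat).
Local Notation M := (colours N).

Definition member (i : nat) (x : X) (V : subset X) : Prop :=
  Us i V /\ close_to V (INR (scale Q i) * R0) x.

Definition member_reach (x : X) (V : subset X) (t : nat) : Prop := close_to V (INR t * R0) x.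

Definition level_owner (i : nat) (x : X) : option (subset X) := owner X (subset X) (member i) x.

Definition level_ramp (i : nat) (x : X) : nat :=
  owned_ramp X (subset X) (scale Q i) (member i) member_reach x.

Definition level_fraction (i : nat) (x : X) : R := INR (level_ramp i x) / INR (scale Q i).

Definition level_weight (x : X) (l : label) : R :=
  match l with (i, c) =>
    match level_owner i x with
    | Some V => level_fraction i x * inner_weight X V N s x0 Kp R0 x c
    | None => 0
    end
  end.

Definition level_centre (x : X) (l : label) : X :=
  match l with (i, c) =>
    match level_owner i x with Some V => bump_centre X V N s x0 x c | None => x end
  end.

Definition level_labels : list label := flat_map (fun i => map (pair i) (seq 0 M)) (seq 0 (S n)).

Hypothesis R0_pos : 0 < R0.
Hypothesis Q_pos : (1 <= Q)%nat.
Hypothesis Us_disjoint : forall i, (i <= n)%nat -> R_disjoint X (2 * INR (scale Q i) * R0) (Us i).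
Hypothesis Us_cover : is_cover X (family_union X n Us).
Hypothesis Us_doubling : forall A, family_union X n Us A -> ls_doubling X N R1 A.
Hypothesis s_pos : 0 < s.
Hypothesis R1_le_s : R1 <= s.
Hypothesis scale_le_s : forall i, (i <= n)%nat -> INR (scale Q i) * R0 <= s.
Hypothesis Kp_le_s : INR Kp * R0 <= s.
Hypothesis Kp_pos : (1 <= Kp)%nat.

Lemma member_unique i x V V' : (i <= n)%nat -> member i x V -> member i x V' -> V = V'.
Proof.
  intros Hi [U1 [v [Hv Dv]]] [U2 [v' [Hv' Dv']]].
  destruct (classic (same_set X V V')) as [Hs|Hs].
  - apply functional_extensionality; intros z; apply propositional_extensionality, Hs.
  - exfalso. destruct (proj2 (Us_disjoint i Hi) V V' U1 U2 Hs) as [delta [Hdelta Hd]].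
    specialize (Hd v v' Hv Hv'). pose proof (dist_tri_l X x v v'). lra.
Qed.

Lemma member_reach_shift x y V t : dst x y < R0 -> member_reach x V t -> member_reach y V (S t).
Proof.
  intros Hxy [v [Hv Dv]]. exists v; split; auto. rewrite S_INR.
  pose proof (dist_tri_l X x y v). lra.
Qed.

Lemma member_reach_member i x y V t :
  member i x V -> (t <= scale Q i)%nat -> member_reach y V t -> member i y V.
Proof.
  intros [HU _] Ht [v [Hv Dv]]. split; auto. exists v; split; auto.
  apply le_INR in Ht. assert (INR t * R0 <= INR (scale Q i) * R0) by (apply Rmult_le_compat_r; lra). lra.
Qed.

Lemma member_close_to i x V : (i <= n)%nat -> member i x V -> close_to V s x.
Proof. intros Hi [_ [v [Hv Dv]]]. exists v; split; auto. pose proof (scale_le_s i Hi). lra. Qed.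

Lemma member_doubling i x V : (i <= n)%nat -> member i x V -> ls_doubling X N R1 V.
Proof. intros Hi [HU _]. apply Us_doubling. now exists i. Qed.

Lemma level_owner_member i x V : level_owner i x = Some V -> member i x V.
Proof. apply choose_opt_some. Qed.

Lemma level_fraction_bounds i x : 0 <= level_fraction i x <= 1.
Proof.
  pose proof (scale_pos Q i Q_pos). unfold level_fraction. split; [apply Rdiv_nonneg; apply pos_INR|].
  apply Rmult_le_reg_r with (INR (scale Q i)); auto. unfold Rdiv.
  rewrite Rmult_assoc, Rinv_l, Rmult_1_l, Rmult_1_r by lra. apply le_INR, owned_ramp_le.
Qed.

Lemma level_fraction_lipschitz i x y : dst x y < R0 -> level_owner i x = level_owner i y ->
  Rabs (level_fraction i x - level_fraction i y) <= 1 / INR (scale Q i).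
Proof.
  intros Hxy E. pose proof (Rinv_0_lt_compat _ (scale_pos Q i Q_pos)).
  unfold level_fraction, Rdiv. rewrite <- Rmult_minus_distr_r, Rabs_mult, (Rabs_right (/ _)) by lra.
  apply Rmult_le_compat_r; [lra|].
  apply (owned_ramp_lipschitz X (subset X) (scale Q i) R0 (member i) member_reach); auto.
  intros; eapply member_reach_shift; eauto.
Qed.

Lemma level_fraction_small i x y : (i <= n)%nat -> dst x y < R0 ->
  ~ (exists V, level_owner i x = Some V /\ level_owner i y = Some V) ->
  level_fraction i x <= 1 / INR (scale Q i).
Proof.
  intros Hi Hxy Hno. pose proof (Rinv_0_lt_compat _ (scale_pos Q i Q_pos)).
  unfold level_fraction, Rdiv; apply Rmult_le_compat_r; [lra|].
  change 1 with (INR 1). apply le_INR.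
  apply (owned_ramp_small X (subset X) (scale Q i) R0 (member i) member_reach) with y; auto.
  - intros; eapply member_unique; eauto.
  - intros; eapply member_reach_shift; eauto.
  - intros; eapply member_reach_member; eauto.
Qed.

Lemma level_weight_nonneg x l : 0 <= level_weight x l.
Proof.
  destruct l as [i c]; simpl. destruct (level_owner i x) as [V|]; [|lra].
  apply Rmult_le_pos; [apply level_fraction_bounds|apply inner_weight_nonneg].
Qed.

Lemma level_mass i x : (i <= n)%nat ->
  rsum (fun c => level_weight x (i, c)) (seq 0 M) = level_fraction i x.
Proof.
  intros Hi. simpl. destruct (level_owner i x) as [V|] eqn:E.
  - apply level_owner_member in E as HV. rewrite rsum_scal, (inner_weight_sum X V N R1 s x0 Kp R0).
    all: eauto using member_doubling, member_close_to. ring.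
  - unfold level_fraction, level_ramp, owned_ramp. fold (level_owner i x).
    rewrite E, rsum_const. simpl; lra.
Qed.

Lemma level_centre_close x l : dst x (level_centre x l) < 7 * s.
Proof.
  destruct l as [i c]; simpl. destruct (level_owner i x) as [V|]; [|rewrite dist_refl; lra].
  unfold bump_centre. destruct owner as [j|] eqn:E; [|rewrite dist_refl; lra].
  apply (choose_opt_some (anchored X V N s x0 c x)) in E. apply E.
Qed.

Definition level_weight_dist_at (i : nat) (x y : X) : R :=
  weight_dist (seq 0 M) (fun z c => level_centre z (i, c)) (fun z c => level_weight z (i, c)) x y.

Lemma level_dist_same_member i x y V : (i <= n)%nat -> dst x y < R0 ->
  level_owner i x = Some V -> level_owner i y = Some V ->
  level_weight_dist_at i x y <= 1 / INR (scale Q i) + 4 * INR M / INR Kp.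
Proof.
  intros Hi Hxy Ex Ey. apply level_owner_member in Ex as HVx; apply level_owner_member in Ey as HVy.
  set (g := inner_weight X V N s x0 Kp R0).
  set (D := weight_dist (seq 0 M) (bump_centre X V N s x0) g x y).
  assert (HD : 0 <= D <= 4 * INR M / INR Kp).
  { split; [apply rsum_nonneg; intros; apply mass_dist_nonneg; apply inner_weight_nonneg|].
    apply (inner_weight_dist X V N R1); eauto using member_doubling, member_close_to. }
  assert (Hpq := level_fraction_lipschitz i x y Hxy ltac:(congruence)).
  pose proof (level_fraction_bounds i x).
  unfold level_weight_dist_at, weight_dist. simpl level_weight; simpl level_centre. rewrite Ex, Ey. fold g.
  eapply Rle_trans.
  { apply (rsum_le _ (fun c => Rabs (level_fraction i x - level_fraction i y) * g y c +
                          level_fraction i x * mass_dist (holds (bump_centre X V N s x0 x c = bump_centre X V N s x0 y c)) (g x c) (g y c))).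
    intros c _. apply mass_dist_scale; try apply inner_weight_nonneg; apply level_fraction_bounds. }
  rewrite rsum_plus, !rsum_scal.
  rewrite (inner_weight_sum X V N R1 s x0 Kp R0); eauto using member_doubling, member_close_to.
  unfold D, weight_dist in HD. nra.
Qed.

Lemma level_dist_other i x y : (i <= n)%nat -> dst x y < R0 ->
  ~ (exists V, level_owner i x = Some V /\ level_owner i y = Some V) ->
  level_weight_dist_at i x y <= 2 / INR (scale Q i).
Proof.
  intros Hi Hxy Hno.
  assert (Hno' : ~ (exists V, level_owner i y = Some V /\ level_owner i x = Some V)) by firstorder.
  assert (Hyx : dst y x < R0) by (rewrite Defs.dist_sym; auto).
  eapply Rle_trans.
  { apply (rsum_le _ (fun c => level_weight x (i, c) + level_weight y (i, c))).
    intros; apply mass_dist_le_plus; apply level_weight_nonneg. }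
  rewrite rsum_plus, !level_mass by auto.
  pose proof (level_fraction_small i x y Hi Hxy Hno).
  pose proof (level_fraction_small i y x Hi Hyx Hno').
  unfold Rdiv in *; lra.
Qed.

Lemma level_dist i x y : (i <= n)%nat -> dst x y < R0 ->
  level_weight_dist_at i x y <= 2 / INR (scale Q i) + 4 * INR M / INR Kp.
Proof.
  intros Hi Hxy. pose proof (Rinv_0_lt_compat _ (scale_pos Q i Q_pos)).
  assert (0 <= 4 * INR M / INR Kp) by (apply Rdiv_nonneg; [pose proof (pos_INR M)|apply pos_INR]; lra).
  destruct (classic (exists V, level_owner i x = Some V /\ level_owner i y = Some V))
    as [[V [Ex Ey]]|Hno].
  - pose proof (level_dist_same_member i x y V Hi Hxy Ex Ey). unfold Rdiv in *; lra.
  - pose proof (level_dist_other i x y Hi Hxy Hno). lra.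
Qed.

Lemma level_labels_nodup : NoDup level_labels.
Proof.
  apply NoDup_flat_map; [apply seq_NoDup| |].
  - intros i _. apply NoDup_map_NoDup_ForallPairs; [|apply seq_NoDup].
    intros c c' _ _ E; now injection E.
  - intros i i' l _ _ Hne Hl Hl'. apply in_map_iff in Hl as [c [<- _]].
    apply in_map_iff in Hl' as [c' [E _]]. injection E; auto.
Qed.

Lemma rsum_level_labels (f : label -> R) :
  rsum f level_labels = rsum (fun i => rsum (fun c => f (i, c)) (seq 0 M)) (seq 0 (S n)).
Proof. unfold level_labels. rewrite rsum_flat_map. apply rsum_ext; intros; apply rsum_map. Qed.

Lemma level_total x : 1 <= rsum (level_weight x) level_labels.
Proof.
  destruct (Us_cover x) as [A [[i [Hi HA]] Ax]].
  assert (HxA : member i x A).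
  { split; auto. exists x; split; auto. rewrite dist_refl. pose proof (scale_pos Q i Q_pos). nra. }
  assert (Hfull : level_ramp i x = scale Q i).
  { apply (owned_ramp_full X (subset X) (scale Q i) (member i) member_reach) with A; auto.
    - intros; eapply member_unique; eauto.
    - intros t Ht. exists x; split; auto. rewrite dist_refl. apply le_INR in Ht. simpl in Ht. nra. }
  rewrite rsum_level_labels.
  eapply Rle_trans;
    [|apply (rsum_single (fun i => rsum (fun c => level_weight x (i, c)) (seq 0 M)) _ i)].
  - rewrite level_mass by auto. unfold level_fraction. rewrite Hfull.
    pose proof (scale_pos Q i Q_pos). right; field; lra.
  - apply in_seq; lia.
  - apply seq_NoDup.
  - intros; apply rsum_nonneg; intros; apply level_weight_nonneg.
Qed.

Lemma geometric_sum k : rsum (fun i => / 2 ^ i) (seq 0 k) <= 2.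
Proof.
  assert (H : forall a, rsum (fun i => / 2 ^ i) (seq a k) <= 2 * / 2 ^ a).
  { induction k as [|k IH]; intros a; simpl.
    - pose proof (pow_lt 2 a). assert (0 < / 2 ^ a) by (apply Rinv_0_lt_compat; lra). lra.
    - pose proof (IH (S a)) as H. simpl in H. rewrite Rinv_mult in H. lra. }
  specialize (H 0%nat). simpl in H. lra.
Qed.

Lemma level_weight_dist x y : dst x y < R0 ->
  weight_dist level_labels level_centre level_weight x y <= 4 / INR Q + 4 * INR (S n) * INR M / INR Kp.
Proof.
  intros Hxy. unfold weight_dist. rewrite (rsum_level_labels (fun l => mass_dist _ _ _)).
  eapply Rle_trans.
  { apply (rsum_le _ (fun i => 2 / INR (scale Q i) + 4 * INR M / INR Kp)).
    intros i Hi; apply in_seq in Hi. exact (level_dist i x y ltac:(lia) Hxy). }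
  rewrite rsum_plus, rsum_const, length_seq.
  assert (HQ : 0 < INR Q) by (apply lt_0_INR; lia).
  rewrite (rsum_ext _ (fun i => 2 / INR Q * / 2 ^ i)).
  2:{ intros i _. unfold scale. rewrite mult_INR, pow_INR. replace (INR 2) with 2 by (simpl; lra).
      pose proof (pow_lt 2 i). field; lra. }
  rewrite rsum_scal. pose proof (geometric_sum (S n)).
  assert (0 < 2 / INR Q) by (apply Rdiv_lt_0_compat; lra).
  assert (2 / INR Q * rsum (fun i => / 2 ^ i) (seq 0 (S n)) <= 4 / INR Q) by (unfold Rdiv in *; nra).
  replace (4 * INR (S n) * INR M / INR Kp) with (4 * INR M / INR Kp * INR (S n)) by (unfold Rdiv; ring).
  lra.
Qed.

Lemma level_l1_weights eta : 4 / INR Q + 4 * INR (S n) * INR M / INR Kp <= eta ->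
  has_l1_weights X R0 (7 * s) eta.
Proof.
  intros Heta. exists level_labels, level_centre, level_weight. repeat split.
  - apply level_labels_nodup.
  - intros; apply level_weight_nonneg; auto.
  - intros; apply level_centre_close; auto.
  - apply level_total.
  - intros x y Hxy. eapply Rle_trans; [apply level_weight_dist|]; auto.
Qed.

End LevelWeights.

Lemma ratio_le_half (a b e : R) : 0 < e -> 0 <= a -> 2 * a / e < b -> a / b <= e / 2.
Proof.
  intros He Ha H. assert (Hb : 0 < b) by (pose proof (Rdiv_nonneg (2 * a) e ltac:(lra) ltac:(lra)); lra).
  assert (2 * a < b * e).
  { replace (2 * a) with (2 * a / e * e) by (field; lra). apply Rmult_lt_compat_r; lra. }
  unfold Rdiv. apply Rmult_le_reg_r with b; auto.
  rewrite Rmult_assoc, Rinv_l, Rmult_1_r by lra. lra.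
Qed.

Lemma exists_nat_gt (r : R) : exists k : nat, r < INR k /\ (1 <= k)%nat.
Proof.
  destruct (exists_pow2_gt r 1 ltac:(lra)) as [m Hm]. exists (2 ^ m + 1)%nat. split; [|lia].
  rewrite plus_INR, pow_INR. replace (INR 2) with 2 by (simpl; lra). simpl; lra.
Qed.

Theorem l1_weights_of_weak_hyperbolic_C (X : MetricSpace) :
  weak_hyperbolic_C X ->
  forall R0 eta, 0 < R0 -> 0 < eta -> exists S, 0 < S /\ has_l1_weights X R0 S eta.
Proof.
  intros HC R0 eta HR Heta.
  destruct (classic (inhabited X)) as [[x0]|Hempty].
  2:{ exists 1; split; [lra|]. exists [], (fun x _ => x), (fun _ _ => 0).
      repeat split; try (intros x; exfalso; apply Hempty; now constructor); constructor. }
  destruct (exists_nat_gt (2 * 4 / eta)) as [Q [HQ Q_pos]].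
  assert (HRs : forall i, 0 < 2 * INR (scale Q i) * R0).
  { intros i. pose proof (scale_pos Q i Q_pos). nra. }
  destruct (HC (fun i => 2 * INR (scale Q i) * R0) HRs) as [n [Us [Hdisj [Hcov [N [R1 Hdbl]]]]]].
  destruct (exists_nat_gt (2 * (4 * INR (S n) * INR (colours N)) / eta)) as [Kp [HKp Kp_pos]].
  set (s := Rmax (Rmax R1 1) (Rmax (INR (scale Q n) * R0) (INR Kp * R0))).
  assert (Hs1 : Rmax R1 1 <= s) by apply Rmax_l.
  assert (Hs2 : Rmax (INR (scale Q n) * R0) (INR Kp * R0) <= s) by apply Rmax_r.
  pose proof (Rmax_l R1 1); pose proof (Rmax_r R1 1).
  pose proof (Rmax_l (INR (scale Q n) * R0) (INR Kp * R0)).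
  pose proof (Rmax_r (INR (scale Q n) * R0) (INR Kp * R0)).
  assert (Hscale : forall i, (i <= n)%nat -> INR (scale Q i) * R0 <= s).
  { intros i Hi. apply Rle_trans with (INR (scale Q n) * R0); [|lra].
    apply Rmult_le_compat_r; [lra|]. apply le_INR, Nat.mul_le_mono_l, Nat.pow_le_mono_r; lia. }
  exists (7 * s). split; [lra|].
  apply (level_l1_weights X R0 Q n Us N R1 s x0 Kp); auto; try lra.
  assert (4 / INR Q <= eta / 2) by (apply ratio_le_half; auto; lra).
  assert (4 * INR (S n) * INR (colours N) / INR Kp <= eta / 2).
  { apply ratio_le_half; auto. pose proof (pos_INR (S n)); pose proof (pos_INR (colours N)); nra. }
  lra.
Qed.

Theorem corollary4p6 (X : MetricSpace) :
  weak_hyperbolic_C X -> property_A X.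
Proof.
  intros HC. apply property_A_of_l1_weights.
  exact (l1_weights_of_weak_hyperbolic_C X HC).
Qed.
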